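(* Let a product two-action game with $m$ players and characteristic tuple $(\underline v,\sigma^1,\dots,\sigma^m)$ be given. Let $\pi\in S_m$ with $F(\pi)\neq\emptyset$, and for $\underline\gamma\in EC(\pi)$ define the increment map $\mathrm{Inc}(\underline\gamma):F(\pi)\to\{0,1\}$ by $$\mathrm{Inc}(\underline\gamma,i):=\Bigl(1+\gamma^i+v_i+|L_0(\underline\gamma)\setminus\{i\}|+\sum_{j\in\mathcal A\setminus F(\pi)}\chi\bigl(\sigma^j(\pi(j)),\sigma^j(i)\bigr)\Bigr)\bmod 2,$$ where $\chi:\mathbb R\times\mathbb R\to\{0,1\}$ is given by $\chi(a,b)=1$ iff $a\ge b$. Then: (i) $\underline\gamma\in EC(\pi)$ is a Nash equilibrium if and only if $\mathrm{Inc}(\underline\gamma,i)=0$ for all $i\in F(\pi)$. (ii) Let $g(\pi)\in EC(\pi)$ be the point with $\gamma^i=1$ for all $i\in F(\pi)$. The map $\underline\gamma\mapsto\mathrm{Inc}(\underline\gamma)$ on $EC(\pi)$ takes only two values: the map $\mathrm{Inc}(g(\pi))$ and its opposite $i\mapsto (1+\mathrm{Inc}(g(\pi),i))\bmod 2$. Moreover $\mathrm{Inc}(\underline\gamma)=\mathrm{Inc}(g(\pi))$ if and only if $|L_0(\underline\gamma)|$ is even. (iii) Either $EC(\pi)$ contains no Nash equilibrium, or exactly half of its elements are Nash equilibria.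
   Context: Fix an integer $m\ge 1$ and $\mathcal A=\{1,\dots,m\}$. A two-action game is a finite game in normal form with player set $\mathcal A$ in which each player $i$ has exactly two pure strategies $s^i_0,s^i_1$, together with utility functions $U^i:S\to\mathbb R$, where $S=\prod_{i\in\mathcal A}\{s^i_0,s^i_1\}$. A mixed strategy combination is identified with $\underline\gamma=(\gamma^1,\dots,\gamma^m)\in[0,1]^m$, where $\gamma^i$ is the probability with which player $i$ plays $s^i_1$. The expected utility $V^i$ is the multilinear extension $V^i(\underline\gamma)=\sum_{(j_1,\dots,j_m)\in\{0,1\}^m}\prod_{k=1}^m p_k(j_k)\,U^i(s^1_{j_1},\dots,s^m_{j_m})$ with $p_k(1)=\gamma^k$, $p_k(0)=1-\gamma^k$. Write $\underline\gamma^{-i}=(\gamma^j)_{j\ne i}$ and $\lambda^i(\underline\gamma^{-i}):=V^i(\underline\gamma)|_{\gamma^i=1}-V^i(\underline\gamma)|_{\gamma^i=0}$. A Nash equilibrium is a point $\underline\gamma\in[0,1]^m$ such that for every $i$: $\lambda^i(\underline\gamma^{-i})=0$ if $0<\gamma^i<1$; $\lambda^i(\underline\gamma^{-i})\le 0$ if $\gamma^i=0$; $\lambda^i(\underline\gamma^{-i})\ge 0$ if $\gamma^i=1$. For $\underline\gamma$ put $L_0(\underline\gamma)=\{i:\gamma^i=0\}$, $L_1(\underline\gamma)=\{i:\gamma^i=1\}$, $L(\underline\gamma)=L_0(\underline\gamma)\cup L_1(\underline\gamma)$. A two-action game is a product two-action game if there exist $\underline v=(v_1,\dots,v_m)\in\{0,1\}^m$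 and numbers $a^i_j\in(0,1)$ for $i,j\in\mathcal A$, $i\ne j$, with $a^{i_1}_j\neq a^{i_2}_j$ whenever $i_1\neq i_2$ and both differ from $j$, such that $\lambda^i(\underline\gamma^{-i})=(-1)^{v_i}\prod_{j\in\mathcal A\setminus\{i\}}(\gamma^j-a^i_j)$ for every $i\in\mathcal A$. For $j\in\mathcal A$ the $j$-th associated permutation $\sigma^j\in S_m$ is the unique permutation with $\sigma^j(j)=j$ such that for $i,i'\in\mathcal A\setminus\{j\}$ one has $\sigma^j(i)<\sigma^j(i')$ iff $a^i_j>a^{i'}_j$. The tuple $(\underline v,\sigma^1,\dots,\sigma^m)$ is the characteristic tuple of the game. For $\pi\in S_m$, $F(\pi)=\{i\in\mathcal A:\pi(i)=i\}$ and $EC(\pi):=\{\underline\gamma\in[0,1]^m \mid L(\underline\gamma)=F(\pi),\ \gamma^j=a^{\pi(j)}_j \text{ for all } j\notin F(\pi)\}$. *)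

(* Two-action games with players 'I_m (player i of the paper
   is the ordinal i-1); pure strategy s^i_1 <-> true, s^i_0 <-> false. *)
From HB Require Import structures.
From mathcomp Require Import all_boot all_order all_algebra all_fingroup.
Set Implicit Arguments. Unset Strict Implicit. Unset Printing Implicit Defensive.
Import Order.TTheory GRing.Theory Num.Theory.
Local Open Scope ring_scope.

Section Game.
Variables (R : realFieldType) (m : nat).

Definition prob_of (g : {ffun 'I_m -> R}) (s : {ffun 'I_m -> bool}) : R :=
  \prod_(k < m) (if s k then g k else 1 - g k).

Definition Vexp (U : 'I_m -> {ffun 'I_m -> bool} -> R) (i : 'I_m)
  (g : {ffun 'I_m -> R}) : R :=
  \sum_(s : {ffun 'I_m -> bool}) prob_of g s * U i s.

Definition setc (g : {ffun 'I_m -> R}) (i : 'I_m) (x : R) : {ffun 'I_m -> R} :=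
  [ffun k => if k == i then x else g k].

Definition lambda U (i : 'I_m) (g : {ffun 'I_m -> R}) : R :=
  Vexp U i (setc g i 1) - Vexp U i (setc g i 0).

Definition in_cube (g : {ffun 'I_m -> R}) : bool := [forall i, 0 <= g i <= 1].

Definition is_NE U (g : {ffun 'I_m -> R}) : bool :=
  in_cube g &&
  [forall i, [&& (0 < g i < 1) ==> (lambda U i g == 0),
                 (g i == 0) ==> (lambda U i g <= 0) &
                 (g i == 1) ==> (0 <= lambda U i g)]].

(* a i j stands for a^i_j; the diagonal a i i is unused *)
Definition is_product_game U (v : 'I_m -> bool) (a : 'I_m -> 'I_m -> R) : Prop :=
  [/\ forall i j, i != j -> 0 < a i j < 1,
      forall j i1 i2, i1 != i2 -> i1 != j -> i2 != j -> a i1 j != a i2 j &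
      forall i g, in_cube g ->
        lambda U i g = (-1) ^+ v i * \prod_(j < m | j != i) (g j - a i j)].

Definition assoc_perm (a : 'I_m -> 'I_m -> R) (j : 'I_m) (s : 'S_m) : Prop :=
  s j = j /\
  forall i i', i != j -> i' != j -> (nat_of_ord (s i) < nat_of_ord (s i'))%N = (a i' j < a i j).

Definition Fix (p : 'S_m) : {set 'I_m} := [set i | p i == i].
Definition L0 (g : {ffun 'I_m -> R}) : {set 'I_m} := [set i | g i == 0].
Definition L1 (g : {ffun 'I_m -> R}) : {set 'I_m} := [set i | g i == 1].
Definition Lset g := L0 g :|: L1 g.

Definition EC (a : 'I_m -> 'I_m -> R) (p : 'S_m) (g : {ffun 'I_m -> R}) : bool :=
  [&& in_cube g, Lset g == Fix p &
      [forall j, (j \notin Fix p) ==> (g j == a (p j) j)]].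

Definition chi (x y : nat) : nat := (y <= x)%N.

(* Inc(g, i); g i is 0 or 1 for i in F(p), encoded as the boolean (g i == 1) *)
Definition Inc (v : 'I_m -> bool) (sigma : 'I_m -> 'S_m) (p : 'S_m)
  (g : {ffun 'I_m -> R}) (i : 'I_m) : nat :=
  ((1 + (g i == 1%R) + v i + #|L0 g :\ i|
    + \sum_(j < m | j \notin Fix p) chi (sigma j (p j)) (sigma j i)) %% 2)%N.

Definition gpt (a : 'I_m -> 'I_m -> R) (p : 'S_m) : {ffun 'I_m -> R} :=
  [ffun i => if i \in Fix p then 1 else a (p i) i].

End Game.

(* For a fixed player i of F(pi) the payoff difference lambda^i is, up to a
   positive factor, (-1)^(v_i + N) where N counts the negative factors
   gamma^j - a^i_j: these are the fixed players with gamma^j = 0 and the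
   non-fixed players j with a^(pi j)_j < a^i_j, read off from sigma^j.  The
   non-fixed players are indifferent, since the factor j = pi^-1 j vanishes.
   Hence Inc(gamma, i) only depends on the parity of |L0(gamma)|, EC(pi) is
   in bijection with the subsets of F(pi) via L0, and flipping one fixed
   coordinate exchanges the two parity classes. *)
From HB Require Import structures.
From mathcomp Require Import all_boot all_order all_algebra all_fingroup.
Set Implicit Arguments. Unset Strict Implicit. Unset Printing Implicit Defensive.
Import Order.TTheory GRing.Theory Num.Theory.
Local Open Scope ring_scope.

Lemma prodr_sign_norm (R : realDomainType) (I : finType) (P : pred I) (f : I -> R) :
  \prod_(j | P j) f j =
  (-1) ^+ (\sum_(j | P j) ((f j < 0)%R : nat))%N * \prod_(j | P j) `|f j|.
Proof.
rewrite (eq_bigr (fun j => (-1) ^+ (f j < 0)%R * `|f j|)); last first.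
  by move=> j _; rewrite mulr_sign_norm.
rewrite big_split /=; congr (_ * _).
by rewrite (big_morph (fun n : nat => (-1) ^+ n : R) (@exprD R (-1)) (expr0 _)).
Qed.

Lemma card_powerset_parity (T : finType) (F : {set T}) (x : T) (c : bool) :
  x \in F -> (#|[set A in powerset F | odd #|A| == c]|.*2 = #|powerset F|)%N.
Proof.
move=> xF.
set P := [set A in powerset F | odd #|A| == c].
set Q := [set A in powerset F | odd #|A| != c].
pose t (A : {set T}) := if x \in A then A :\ x else x |: A.
have tK : involutive t.
  move=> A; rewrite /t; have [xA | xA] := boolP (x \in A).
    by rewrite setD11 setD1K.
  by rewrite setU11 setU1K.
have odd_t (A : {set T}) : odd #|t A| = ~~ odd #|A|.
  rewrite /t; case: ifP => xA; last by rewrite cardsU1 xA.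
  by rewrite [#|A|](cardsD1 x) xA negbK.
have t_sub (A : {set T}) : A \subset F -> t A \subset F.
  rewrite /t; case: ifP => _ AF; first exact: subset_trans (subsetDl _ _) AF.
  by rewrite subUset sub1set xF.
have tPQ : t @: P \subset Q.
  apply/subsetP => B /imsetP[A]; rewrite inE => /andP[AF /eqP Ac] ->.
  by rewrite !inE (odd_t A) -Ac t_sub -?powersetE //; case: odd.
have tQP : t @: Q \subset P.
  apply/subsetP => B /imsetP[A]; rewrite inE => /andP[AF Ac] ->.
  by rewrite !inE (odd_t A) t_sub -?powersetE //; move: Ac; case: (c); case: odd.
have cardQ : #|Q| = #|P|.
  apply/eqP; rewrite eqn_leq.
  by rewrite -{1}(card_imset Q (inv_inj tK)) -{2}(card_imset P (inv_inj tK)) !subset_leq_card.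
rewrite -addnn -{2}cardQ -(cardsID [set A : {set T} | odd #|A| == c] (powerset F)).
by congr (_ + _)%N; apply: eq_card => A; rewrite !inE andbC.
Qed.

Lemma count_enum_set (T : finType) (X : {set T}) (p : pred T) :
  count p (enum X) = #|[set A in X | p A]|.
Proof.
have -> : [set A in X | p A] = X :&: [set A | p A] by apply/setP => A; rewrite !inE.
rewrite cardE (perm_size (enum_setI _ _)) size_filter.
by apply: eq_count => A; rewrite inE.
Qed.

Definition best_reply (R : numDomainType) (x l : R) : bool :=
  [&& (0 < x < 1) ==> (l == 0), (x == 0) ==> (l <= 0) & (x == 1) ==> (0 <= l)].

Lemma best_reply0 (R : numDomainType) (x : R) : best_reply x 0.
Proof. by rewrite /best_reply eqxx lexx !implybT. Qed.

Lemma best_reply_sign (R : realDomainType) (x Q : R) (n : nat) :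
  (x == 0) || (x == 1) -> 0 < Q ->
  best_reply x ((-1) ^+ n * Q) = odd ((x == 1) + n).
Proof.
move=> x01 Q_gt0; rewrite oddD -signr_odd /best_reply.
have Q_le0F : (Q <= 0) = false by rewrite leNgt Q_gt0.
case/orP: x01 => /eqP->; rewrite ?ltxx ?andbF eqxx /=;
  by case: odd; rewrite ?expr0 ?expr1 ?mul1r ?mulN1r ?oppr_le0 ?oppr_ge0 ?Q_le0F
    ?(eq_sym 0 1) ?oner_eq0 ?(ltW Q_gt0).
Qed.

Section ProductGame.
Variables (R : realFieldType) (m : nat) (U : 'I_m -> {ffun 'I_m -> bool} -> R).
Variables (v : 'I_m -> bool) (a : 'I_m -> 'I_m -> R) (sigma : 'I_m -> 'S_m).
Variable pi : 'S_m.
Hypothesis game : is_product_game U v a.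
Hypothesis sigmaP : forall j, assoc_perm a j (sigma j).

Local Notation F := (Fix pi).
Local Notation Inc := (Inc v sigma pi).
Local Notation NE := (is_NE U).

Lemma is_NEE g : NE g = in_cube g && [forall i, best_reply (g i) (lambda U i g)].
Proof. by []. Qed.

Lemma a_in01 i j : i != j -> 0 < a i j < 1.
Proof. by case: game => H _ _; apply: H. Qed.

Lemma lambdaE i g : in_cube g ->
  lambda U i g = (-1) ^+ v i * \prod_(j < m | j != i) (g j - a i j).
Proof. by case: game => _ _; apply. Qed.

Lemma a_pi_in01 j : j \notin F -> 0 < a (pi j) j < 1.
Proof. by rewrite inE; apply: a_in01. Qed.

Lemma pi_neq_fix i j : i \in F -> j \notin F -> pi j != i.
Proof.
rewrite !inE => /eqP pii; apply: contra => /eqP pij.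
have ji : j = i by apply: (@perm_inj _ pi); rewrite pij pii.
by rewrite pij ji.
Qed.

Lemma neq_fix i j : i \in F -> j \notin F -> j != i.
Proof. by move=> Fi; apply: contraNneq => ->. Qed.

Lemma a_pi_neq i j : i \in F -> j \notin F -> a (pi j) j != a i j.
Proof.
move=> Fi Fj; case: game => _ a_inj _; apply: a_inj; last by rewrite eq_sym neq_fix.
- exact: pi_neq_fix.
- by move: Fj; rewrite inE.
Qed.

Section ECmember.
Variable g : {ffun 'I_m -> R}.
Hypothesis ECg : EC a pi g.

Lemma EC_cube : in_cube g.
Proof. by case/and3P: ECg. Qed.

Lemma EC_fix j : (j \in F) = (g j == 0) || (g j == 1).
Proof. by case/and3P: ECg => _ /eqP <- _; rewrite !inE. Qed.

Lemma EC_nfix j : j \notin F -> g j = a (pi j) j.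
Proof. by move=> Fj; case/and3P: ECg => _ _ /forallP/(_ j); rewrite Fj => /eqP. Qed.

Lemma EC_L0 j : (j \in L0 g) = (j \in F) && (g j == 0).
Proof. by rewrite EC_fix [j \in L0 g]inE; case: eqP; rewrite ?andbF. Qed.

Lemma EC_L0_sub : L0 g \subset F.
Proof. by apply/subsetP => j; rewrite EC_L0 => /andP[]. Qed.

Variable i : 'I_m.
Hypothesis Fi : i \in F.

Lemma factor_fix_neg j : j \in F -> j != i -> (g j - a i j < 0) = (g j == 0).
Proof.
move=> Fj ji; have /andP[a_gt0 a_lt1] : 0 < a i j < 1 by apply: a_in01; rewrite eq_sym.
move: Fj; rewrite EC_fix => /orP[] /eqP->; first by rewrite sub0r oppr_lt0 a_gt0 eqxx.
by rewrite subr_lt0 ltNge (ltW a_lt1) oner_eq0.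
Qed.

Lemma factor_nfix_neg j : j \notin F ->
  (g j - a i j < 0) = (sigma j i <= sigma j (pi j))%N.
Proof.
move=> Fj; have pjj : pi j != j by move: Fj; rewrite inE.
have [_ sigma_ord] := sigmaP j.
rewrite EC_nfix // subr_lt0 -sigma_ord //; last by rewrite eq_sym (neq_fix Fi Fj).
rewrite ltn_neqAle; suff -> : (nat_of_ord (sigma j i) != sigma j (pi j)) by [].
by apply: contraNneq (pi_neq_fix Fi Fj) => /ord_inj/perm_inj->.
Qed.

Lemma factor_neq0 j : j != i -> g j - a i j != 0.
Proof.
move=> ji; rewrite subr_eq0; have [Fj | Fj] := boolP (j \in F).
  have /andP[a_gt0 a_lt1] : 0 < a i j < 1 by apply: a_in01; rewrite eq_sym.
  by move: Fj; rewrite EC_fix => /orP[] /eqP->;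
    rewrite ?(lt_eqF a_gt0) ?(gt_eqF a_lt1).
by rewrite EC_nfix ?a_pi_neq.
Qed.

Definition chi_sum := (\sum_(j < m | j \notin F) chi (sigma j (pi j)) (sigma j i))%N.

Lemma count_neg_factors :
  (\sum_(j < m | j != i) ((g j - a i j < 0)%R : nat))%N = (#|L0 g :\ i| + chi_sum)%N.
Proof.
rewrite /chi_sum -sum1_card big_mkcond [X in (X + _)%N]big_mkcond.
rewrite [X in (_ + X)%N]big_mkcond -big_split /=; apply: eq_bigr => j _.
rewrite in_setD1 EC_L0; have [Fj | Fj] := boolP (j \in F).
  by case: eqVneq => [//| ji]; rewrite addn0 factor_fix_neg.
by rewrite (neq_fix Fi Fj) factor_nfix_neg.
Qed.

Lemma lambda_fix : exists2 Q, 0 < Q &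
  lambda U i g = (-1) ^+ (v i + (#|L0 g :\ i| + chi_sum)) * Q.
Proof.
exists (\prod_(j < m | j != i) `|g j - a i j|).
  by apply: prodr_gt0 => j ji; rewrite normr_gt0 factor_neq0.
by rewrite lambdaE ?EC_cube // prodr_sign_norm count_neg_factors mulrA -exprD.
Qed.

Lemma odd_L0D1 : odd ((g i == 1) + #|L0 g :\ i|) = ~~ odd #|L0 g|.
Proof.
rewrite [#|L0 g|](cardsD1 i) EC_L0 Fi /=.
by move: Fi; rewrite EC_fix => /orP[] /eqP->;
  rewrite ?eqxx ?oner_eq0 1?eq_sym ?oner_eq0 /= ?negbK.
Qed.

Lemma IncE : Inc g i = odd (#|L0 g| + v i + chi_sum).
Proof.
rewrite /Inc modn2 -/chi_sum; have := odd_L0D1; rewrite !oddD.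
by case: (g i == 1); case: (v i); case: (odd #|L0 g :\ i|); case: (odd #|L0 g|);
  case: (odd chi_sum).
Qed.

Lemma best_reply_fix : best_reply (g i) (lambda U i g) = (Inc g i == 0%N).
Proof.
have [Q Q_gt0 ->] := lambda_fix.
rewrite best_reply_sign // -?EC_fix // IncE; have := odd_L0D1; rewrite !oddD.
by case: (g i == 1); case: (v i); case: (odd #|L0 g :\ i|); case: (odd #|L0 g|);
  case: (odd chi_sum).
Qed.
End ECmember.

Lemma lambda_nfix g j : EC a pi g -> j \notin F -> lambda U j g = 0.
Proof.
move=> ECg Fj; set k := (pi^-1)%g j.
have pik : pi k = j by rewrite permKV.
have kj : k != j by apply: contraNneq Fj => kj; rewrite inE -{1}kj pik.
have Fk : k \notin F by rewrite inE pik eq_sym.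
by rewrite lambdaE ?EC_cube // (bigD1 k) //= EC_nfix // pik subrr mul0r mulr0.
Qed.

Lemma NE_Inc0 g : EC a pi g -> NE g <-> forall i, i \in F -> Inc g i = 0%N.
Proof.
move=> ECg; rewrite is_NEE EC_cube //; split.
  by move/forallP => NEg i Fi; apply/eqP; rewrite -best_reply_fix.
move=> Inc0; apply/forallP => i; have [Fi | Fi] := boolP (i \in F).
  by rewrite best_reply_fix ?Inc0.
by rewrite lambda_nfix ?best_reply0.
Qed.

Definition ec_point (A : {set 'I_m}) : {ffun 'I_m -> R} :=
  [ffun i => if i \in F then (if i \in A then 0 else 1) else a (pi i) i].

Section ECpointOf.
Variable A : {set 'I_m}.
Hypothesis AF : A \subset F.

Lemma L0_ec_point : L0 (ec_point A) = A.
Proof.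
apply/setP => i; rewrite inE ffunE; case: ifPn => Fi.
  by case: ifP; rewrite ?eqxx ?oner_eq0.
have /andP[a_gt0 _] := a_pi_in01 Fi.
by rewrite gt_eqF //; apply/esym/negbTE; apply: contra Fi; apply/subsetP.
Qed.

Lemma EC_ec_point : EC a pi (ec_point A).
Proof.
apply/and3P; split.
- apply/forallP => i; rewrite ffunE; case: ifPn => Fi.
    by case: ifP; rewrite ?lexx ?ler01.
  by have /andP[? ?] := a_pi_in01 Fi; rewrite !ltW.
- apply/eqP/setP => i; rewrite /Lset L0_ec_point in_setU [i \in L1 _]inE ffunE.
  have [Fi | Fi] := boolP (i \in F); first by case: (i \in A); rewrite ?eqxx ?orbT.
  have /andP[_ a_lt1] := a_pi_in01 Fi; rewrite lt_eqF // orbF.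
  by apply: contraNF Fi; apply/subsetP.
- by apply/forallP => j; apply/implyP => Fj; rewrite ffunE (negbTE Fj).
Qed.
End ECpointOf.

Lemma ec_point_L0 g : EC a pi g -> ec_point (L0 g) = g.
Proof.
move=> ECg; apply/ffunP => i; rewrite ffunE EC_L0 //; case: ifPn => Fi /=.
  by move: Fi; rewrite (EC_fix ECg) => /orP[] /eqP->; rewrite ?eqxx ?oner_eq0.
by rewrite EC_nfix.
Qed.

Lemma gpt_ec_point : gpt a pi = ec_point set0.
Proof. by apply/ffunP => i; rewrite !ffunE in_set0. Qed.

Lemma EC_gpt : EC a pi (gpt a pi).
Proof. by rewrite gpt_ec_point EC_ec_point ?sub0set. Qed.

Lemma Inc_gpt g i : EC a pi g -> i \in F ->
  Inc g i = odd (#|L0 g| + Inc (gpt a pi) i).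
Proof.
move=> ECg Fi; rewrite !IncE ?EC_gpt // gpt_ec_point L0_ec_point ?sub0set //.
by rewrite cards0 add0n -addnA oddD [odd (_ + odd _)]oddD oddb.
Qed.

Lemma odd_Inc (g : {ffun 'I_m -> R}) i : odd (Inc g i) = Inc g i :> nat.
Proof. by rewrite /Inc modn2 oddb. Qed.

Lemma Inc_gpt_cases g : EC a pi g ->
  (forall i, i \in F -> Inc g i = Inc (gpt a pi) i) \/
  (forall i, i \in F -> Inc g i = ((1 + Inc (gpt a pi) i) %% 2)%N).
Proof.
move=> ECg; have [oddL0 | evenL0] := boolP (odd #|L0 g|); [right | left] => i Fi;
  rewrite (Inc_gpt ECg Fi) oddD.
  by rewrite oddL0 modn2 oddD.
by rewrite (negbTE evenL0) odd_Inc.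
Qed.

Lemma Inc_eq_gpt g : F != set0 -> EC a pi g ->
  (forall i, i \in F -> Inc g i = Inc (gpt a pi) i) <-> ~~ odd #|L0 g|.
Proof.
case/set0Pn => i0 Fi0 ECg; split => [/(_ i0 Fi0) | evenL0 i Fi].
  rewrite (Inc_gpt ECg Fi0) oddD -odd_Inc oddb.
  by case: (odd #|L0 g|); case: (odd (Inc (gpt a pi) i0)).
by rewrite (Inc_gpt ECg Fi) oddD (negbTE evenL0) odd_Inc.
Qed.

Lemma NE_parity g0 g i0 : i0 \in F -> EC a pi g0 -> EC a pi g -> NE g0 ->
  NE g = (odd #|L0 g| == odd #|L0 g0|).
Proof.
move=> Fi0 ECg0 ECg /(NE_Inc0 ECg0) Inc0.
have Inc_g i : i \in F -> Inc g i = odd #|L0 g| (+) odd #|L0 g0| :> nat.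
  move=> Fi; move: (Inc0 i Fi); rewrite (Inc_gpt ECg0) ?(Inc_gpt ECg) // !oddD.
  by case: (odd #|L0 g|); case: (odd #|L0 g0|); case: (odd (Inc (gpt a pi) i)).
apply/idP/eqP => [/(NE_Inc0 ECg)/(_ i0 Fi0) | same].
  by rewrite Inc_g //; case: (odd #|L0 g|); case: (odd #|L0 g0|).
by apply/(NE_Inc0 ECg) => i Fi; rewrite Inc_g // same addbb.
Qed.

Definition ec_points := [seq ec_point A | A <- enum (powerset F)].

Lemma ec_points_uniq : uniq ec_points.
Proof.
rewrite map_inj_in_uniq ?enum_uniq // => A B.
rewrite !mem_enum !powersetE => AF BF eqAB.
by rewrite -(L0_ec_point AF) eqAB L0_ec_point.
Qed.

Lemma mem_ec_points g : (g \in ec_points) = EC a pi g.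
Proof.
apply/mapP/idP => [[A] | ECg].
  by rewrite mem_enum powersetE => AF ->; apply: EC_ec_point.
by exists (L0 g); rewrite ?ec_point_L0 // mem_enum powersetE EC_L0_sub.
Qed.

Lemma NE_half : F != set0 ->
  ~~ has NE ec_points \/ ((count NE ec_points).*2 = size ec_points)%N.
Proof.
case/set0Pn => i0 Fi0; have [/hasP[_ /mapP[A0 A0F ->] NE0] | ] := boolP (has NE _);
  last by left.
right; rewrite mem_enum powersetE in A0F.
rewrite size_map -cardE count_map -(card_powerset_parity (odd #|A0|) Fi0).
rewrite count_enum_set; congr (_.*2); apply: eq_card => A; rewrite !inE.
apply: andb_id2l => AF; rewrite (NE_parity Fi0 _ _ NE0) ?EC_ec_point //.
by rewrite !L0_ec_point.
Qed.

End ProductGame.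

Theorem theorem3p7 (R : realFieldType) (m : nat)
  (U : 'I_m -> {ffun 'I_m -> bool} -> R) (v : 'I_m -> bool)
  (a : 'I_m -> 'I_m -> R) (sigma : 'I_m -> 'S_m) (pi : 'S_m) :
  (0 < m)%N ->
  is_product_game U v a ->
  (forall j, assoc_perm a j (sigma j)) ->
  Fix pi != set0 ->
  [/\ (* (i) *)
      forall g, EC a pi g ->
        (is_NE U g <-> forall i, i \in Fix pi -> Inc v sigma pi g i = 0%N),
      (* (ii) *)
      EC a pi (gpt a pi) /\
      (forall g, EC a pi g ->
        ((forall i, i \in Fix pi -> Inc v sigma pi g i = Inc v sigma pi (gpt a pi) i)
         \/ (forall i, i \in Fix pi ->
               Inc v sigma pi g i = ((1 + Inc v sigma pi (gpt a pi) i) %% 2)%N)) /\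
        ((forall i, i \in Fix pi -> Inc v sigma pi g i = Inc v sigma pi (gpt a pi) i)
         <-> ~~ odd #|L0 g|)) &
      (* (iii) : EC(pi) is finite, and either has no NE or exactly half are NE *)
      exists s : seq {ffun 'I_m -> R},
        [/\ uniq s, (forall g, (g \in s) = EC a pi g) &
            ~~ has (is_NE U) s \/ ((count (is_NE U) s).*2 = size s)%N]].
Proof.
move=> _ game sigmaP F_neq0; split.
- by move=> g; apply: NE_Inc0.
- split; first exact: (EC_gpt pi game).
  move=> g ECg; split; first exact: (Inc_gpt_cases sigma game ECg).
  exact: (Inc_eq_gpt sigma game F_neq0 ECg).
- exists (ec_points a pi); split; first exact: (ec_points_uniq pi game).
    exact: (mem_ec_points pi game).
  exact: (NE_half game sigmaP F_neq0).
Qed.
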